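(* Let $A$ and $B$ be bounded modular lattices and let $(\alpha,\beta)$ be a retractable Galois connection between $A$ and $B$ such that $\beta(0)=0$. Then: (i) $\mathrm{udim}(B)\le \mathrm{udim}(A)$. (ii) If $(\alpha,\beta)$ is essential, then $\mathrm{udim}(A)=\mathrm{udim}(B)$. (iii) If $A$ is cyclically generated, $(\alpha,\beta)$ is cyclically essential and $\beta$ is additive, then $\mathrm{udim}(A)=\mathrm{udim}(B)$.
   Context: A bounded lattice $(X,\wedge,\vee,0,1)$ has least element $0$ and greatest element $1$, $0\neq1$. A subset $Y\subseteq X\setminus\{0\}$ is join-independent if $(y_1\vee\cdots\vee y_n)\wedge x=0$ for every finite subset $\{y_1,\dots,y_n\}\subseteq Y$ and every $x\in Y\setminus\{y_1,\dots,y_n\}$. The uniform dimension $\mathrm{udim}(X)$ is the supremum of all $k$ such that $X$ has a join-independent subset with $k$ elements if this supremum is finite, and is $\infty$ otherwise (inequalities are understood in $\mathbb{N}\cup\{\infty\}$). A Galois connection between lattices $A$ and $B$ is a pair of order-preserving maps $\alpha:A\to B$, $\beta:B\to A$ with $\alpha(a)\le b$ iff $a\le\beta(b)$. For $a\le c$, $a$ is essential in $[0,c]=\{x:0\le x\le c\}$ if for every $x\le c$, $a\wedge x=0$ implies $x=0$. An element $a$ is cyclic if $[0,a]$ is a distributive lattice satisfying the ascending chain condition; $A$ is cyclically generated if every element is a join of cyclic elements. The Galois connection is essential (resp. cyclically essential) if for every $a\in A$ (resp. every cyclic $a\in A$), $a$ is essential in $[0,\beta\alpha(a)]$; it is retractable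 if for every $b\in B$, $\alpha\beta(b)$ is essential in $[0,b]$. The map $\beta$ is additive if $\beta(b\vee b')=\beta(b)\vee\beta(b')$ for all $b,b'\in B$ with $b\wedge b'=0$. *)

From mathcomp Require Import all_boot all_order.
Set Implicit Arguments. Unset Strict Implicit. Unset Printing Implicit Defensive.
Import Order.TTheory.
Local Open Scope order_scope.

Section Defs.
Context {d : Order.disp_t} (X : tbLatticeType d).

Definition modular_lattice : Prop :=
  forall a b c : X, a <= c -> a `|` (b `&` c) = (a `|` b) `&` c.

Definition join_independent (s : seq X) : Prop :=
  uniq s /\ (forall y, y \in s -> y != \bot) /\
  forall (t : seq X) (x : X), t != [::] -> {subset t <= s} ->
    x \in s -> x \notin t -> (\join_(y <- t) y) `&` x = \bot.

Definition has_indep (k : nat) : Prop :=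
  exists s : seq X, join_independent s /\ size s = k.

Definition essential_in (a c : X) : Prop :=
  a <= c /\ forall x : X, x <= c -> a `&` x = \bot -> x = \bot.

Definition cyclic_elt (a : X) : Prop :=
  (forall x y z : X, x <= a -> y <= a -> z <= a ->
     x `&` (y `|` z) = (x `&` y) `|` (x `&` z)) /\
  ~ (exists f : nat -> X, forall n, f n <= a /\ f n < f n.+1).

Definition cyclically_generated : Prop :=
  forall a : X, exists S : X -> Prop,
    (forall x, S x -> cyclic_elt x) /\
    (forall x, S x -> x <= a) /\
    (forall u, (forall x, S x -> x <= u) -> a <= u).
End Defs.

(* udim X <= udim Y in N u {oo}: sup of achievable sizes compared *)
Definition udim_le {d1 d2 : Order.disp_t} (X : tbLatticeType d1)
  (Y : tbLatticeType d2) : Prop :=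
  forall k, has_indep X k -> exists k', (k <= k')%N /\ has_indep Y k'.

Definition udim_eq {d1 d2 : Order.disp_t} (X : tbLatticeType d1)
  (Y : tbLatticeType d2) : Prop := udim_le X Y /\ udim_le Y X.

Section Galois.
Context {d1 d2 : Order.disp_t} {A : tbLatticeType d1} {B : tbLatticeType d2}.
Variables (alpha : A -> B) (beta : B -> A).

Definition galois_connection : Prop :=
  (forall a a' : A, a <= a' -> alpha a <= alpha a') /\
  (forall b b' : B, b <= b' -> beta b <= beta b') /\
  (forall a b, (alpha a <= b) <-> (a <= beta b)).

Definition gc_essential : Prop :=
  forall a : A, essential_in a (beta (alpha a)).

Definition gc_cyclically_essential : Prop :=
  forall a : A, cyclic_elt a -> essential_in a (beta (alpha a)).

Definition gc_retractable : Prop :=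
  forall b : B, essential_in (alpha (beta b)) b.

Definition beta_additive : Prop :=
  forall b b' : B, b `&` b' = \bot -> beta (b `|` b') = beta b `|` beta b'.
End Galois.

(* [beta] preserves meets and, by retractability, reflects \bot, so it maps
   independent families of B to independent families of A.  Conversely
   [alpha] maps an independent family of A to an independent one as soon as
   the family of closures [beta (alpha a)] is independent.  In a modular
   lattice, essential extensions of the members of an independent family stay
   independent; this settles the essential case, and the cyclically essential
   case once each member is shrunk to a nonzero cyclic element below it,
   additivity of [beta] then making [beta \o alpha] commute with the joins
   involved. *)

From mathcomp Require Import all_boot all_order.
From Stdlib Require Import Classical ClassicalEpsilon.
Import Order.TTheory.
Local Open Scope order_scope.

Section Independence.
Context {d : Order.disp_t} {X : tbLatticeType d}.

Lemma indep_meet_eq0 {s t : seq X} {x : X} : join_independent s ->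
  {subset t <= s} -> x \in s -> x \notin t -> (\join_(y <- t) y) `&` x = \bot.
Proof.
case=> _ [_ ind]; case: t => [|z t] sub xs xt; first by rewrite big_nil meet0x.
exact: ind.
Qed.

Lemma indep_map {d' : Order.disp_t} {Y : tbLatticeType d'} (f : X -> Y)
    {s : seq X} :
  join_independent s -> (forall x, x \in s -> f x != \bot) ->
  (forall t x, {subset t <= s} -> x \in s -> x \notin t ->
     (\join_(y <- t) f y) `&` f x = \bot) ->
  join_independent (map f s).
Proof.
move=> [us _] fnz fmeet; split; [|split].
- rewrite map_inj_in_uniq // => x y xs ys fxy; apply/eqP.
  apply: contraTT (fnz x xs) => nxy; rewrite negbK; apply/eqP.
  have := fmeet [:: y] x; rewrite big_seq1 -fxy meetxx.
  apply => //; last by rewrite inE.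
  by move=> z; rewrite inE => /eqP ->.
- by move=> _ /mapP [x xs ->]; apply: fnz.
- move=> _ _ _ /subset_mapP [t /allP tsub ->] /mapP [x xs ->] xt.
  by rewrite big_map; apply: fmeet => //; apply: contra xt => /(map_f f).
Qed.

Lemma indep_shrink (g : X -> X) (s : seq X) : join_independent s ->
  (forall x, x \in s -> g x != \bot /\ g x <= x) -> join_independent (map g s).
Proof.
move=> ind gs; apply: (indep_map g ind) => [x /gs [] //|t x sub xs xt].
apply/eqP; rewrite -lex0 -[leRHS](indep_meet_eq0 ind sub xs xt).
apply: leI2; last by case: (gs x xs).
apply/joinsP_seq => y yt _; apply: le_trans (joins_sup_seq id yt isT).
by case: (gs y (sub y yt)).
Qed.

End Independence.

Section Essential.
Context {d : Order.disp_t} {X : tbLatticeType d}.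

Lemma essential0 (c : X) : essential_in \bot c -> c = \bot.
Proof. by case=> _ /(_ c (lexx _)); rewrite meet0x => /(_ erefl). Qed.

Lemma essential_disjoint (u u' x x' : X) : u `&` x = \bot ->
  essential_in u u' -> essential_in x x' -> u' `&` x' = \bot.
Proof.
move=> ux [uu' eu] [xx' ex]; apply: ex; first exact: leIr.
rewrite meetCA; apply: eu; first exact: leIl.
by apply/eqP; rewrite -lex0 -ux leI2 // (le_trans (leIr _ _) (leIl _ _)).
Qed.

Hypothesis hmod : modular_lattice X.

Lemma modular_le_of_meet_eq0 (a r w : X) :
  w <= a `|` r -> a `&` (r `|` w) = \bot -> w <= r.
Proof.
move=> war arw; have := @hmod r a (r `|` w) (leUl r w).
rewrite arw joinx0 => ->.
by rewrite lexI leUr joinC war.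
Qed.

Variables (s : seq X) (f : X -> X).
Hypotheses (ind : join_independent s)
           (ess : forall x, x \in s -> essential_in x (f x)).

(* The family obtained from [s] by replacing the members of [t1] with their
   essential extensions is still independent. *)
Lemma essential_extension_indep_mixed (t1 t2 : seq X) (x : X) :
  {subset t1 <= s} -> {subset t2 <= s} -> x \in s ->
  x \notin t1 -> x \notin t2 -> (forall z, z \in t1 -> z \notin t2) ->
  ((\join_(y <- t1) f y) `|` \join_(y <- t2) y) `&` x = \bot.
Proof.
elim: t1 t2 x => [|y t1 IH] t2 x s1 s2 xs xt1 xt2 dj.
  by rewrite big_nil join0x; exact: (indep_meet_eq0 ind).
have ys : y \in s by apply: s1; rewrite inE eqxx.
have {}s1 : {subset t1 <= s} by move=> z zt; apply: s1; rewrite inE zt orbT.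
move: xt1; rewrite inE negb_or => /andP [xy xt1].
have yt2 : y \notin t2 by apply: dj; rewrite inE eqxx.
have {}dj z : z \in t1 -> z \notin t2.
  by move=> zt; apply: dj; rewrite inE zt orbT.
rewrite big_cons; have [yt1 | yt1] := boolP (y \in t1).
  by rewrite (join_idPr (joins_sup_seq f yt1 isT)); apply: IH.
rewrite -joinA; set r := (\join_(j <- t1) f j) `|` _.
have ryx : (y `|` r) `&` x = \bot.
  have := IH (y :: t2) x s1 _ xs xt1 _ _; rewrite big_cons joinCA; apply.
  - by move=> z; rewrite inE => /orP [/eqP -> //|/s2].
  - by rewrite inE negb_or xy.
  - by move=> z zt; rewrite inE negb_or dj // andbT; apply: contraNneq yt1 => <-.
have rxy : (r `|` x) `&` y = \bot.
  have := IH (x :: t2) y s1 _ ys yt1 _ _; rewrite big_cons joinCA joinC; apply.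
  - by move=> z; rewrite inE => /orP [/eqP -> //|/s2].
  - by rewrite inE negb_or eq_sym xy.
  - by move=> z zt; rewrite inE negb_or dj // andbT; apply: contraNneq xt1 => <-.
have [_ ey] := ess y ys.
have wr : (f y `|` r) `&` x <= r.
  apply: modular_le_of_meet_eq0; first exact: leIl.
  apply: ey; first exact: leIl.
  apply/eqP; rewrite -lex0 -rxy meetC leI2 //.
  by apply: le_trans (leIr _ _) _; apply: leU2 => //; apply: leIr.
by apply/eqP; rewrite -lex0 -ryx lexI leIr andbT (le_trans wr) ?leUr.
Qed.

Lemma essential_extension_meet_eq0 (t : seq X) (x : X) :
  {subset t <= s} -> x \in s -> x \notin t ->
  (\join_(y <- t) f y) `&` f x = \bot.
Proof.
move=> sub xs xt; have [_ ex] := ess x xs; apply: ex; first exact: leIr.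
have : (\join_(y <- t) f y `|` \join_(y <- [::]) y) `&` x = \bot.
  by apply: essential_extension_indep_mixed.
rewrite big_nil joinx0 => tx; apply/eqP; rewrite -lex0 -[leRHS]tx meetC.
by rewrite leI2 ?leIl.
Qed.

End Essential.

Section CyclicallyGenerated.
Context {d : Order.disp_t} {X : tbLatticeType d}.
Hypothesis hcg : cyclically_generated X.

Lemma exists_cyclic_below {a : X} : a != \bot ->
  exists c, [/\ cyclic_elt c, c != \bot & c <= a].
Proof.
have [S [Scyc [Sa Sjoin]]] := hcg a; move=> a0; apply: NNPP => none.
apply/negP: a0; rewrite negbK -lex0; apply: Sjoin => x Sx.
rewrite lex0; apply: contraT => x0.
by case: none; exists x; split; [apply: Scyc | | apply: Sa].
Qed.

Lemma exists_cyclic_indep {s : seq X} : join_independent s ->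
  exists c : seq X,
    [/\ join_independent c, size c = size s & {in c, forall y, cyclic_elt y}].
Proof.
move=> ind; have [g gP] : exists g : X -> X,
    forall a, a != \bot -> [/\ cyclic_elt (g a), g a != \bot & g a <= a].
  apply: (choice (fun a c => a != \bot -> [/\ cyclic_elt c, c != \bot & c <= a])).
  move=> a; have [a0 | a0] := eqVneq a \bot; first by exists a.
  by have [c cP] := exists_cyclic_below a0; exists c.
have s0 x : x \in s -> x != \bot by case: ind => _ [+ _]; apply.
exists (map g s); split; first by apply: indep_shrink => // x /s0 /gP [].
  by rewrite size_map.
by move=> _ /mapP [x /s0 /gP [] ? _ _ ->].
Qed.

End CyclicallyGenerated.

Section GaloisConnection.
Context {d1 d2 : Order.disp_t} {A : tbLatticeType d1} {B : tbLatticeType d2}.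
Context {alpha : A -> B} {beta : B -> A}.
Hypothesis hgc : galois_connection alpha beta.

Lemma gc_unit a : a <= beta (alpha a).
Proof. by case: hgc => _ [_ /(_ a (alpha a))] [] /(_ (lexx _)). Qed.

Lemma alpha0 : alpha \bot = \bot.
Proof. by case: hgc => _ [_ adj]; apply/eqP; rewrite -lex0 adj le0x. Qed.

Lemma alphaU u v : alpha (u `|` v) = alpha u `|` alpha v.
Proof.
case: hgc => ma [_ adj]; apply: le_anti; apply/andP; split.
  by apply/adj; rewrite leUx; apply/andP; split; apply/adj; rewrite ?leUl ?leUr.
by rewrite leUx; apply/andP; split; apply: ma; rewrite ?leUl ?leUr.
Qed.

Lemma betaI u v : beta (u `&` v) = beta u `&` beta v.
Proof.
case: hgc => _ [mb adj]; apply: le_anti; apply/andP; split.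
  by rewrite lexI; apply/andP; split; apply: mb; rewrite ?leIl ?leIr.
by apply/adj; rewrite lexI; apply/andP; split; apply/adj; rewrite ?leIl ?leIr.
Qed.

Lemma join_beta_le (t : seq B) :
  \join_(y <- t) beta y <= beta (\join_(y <- t) y).
Proof.
case: hgc => _ [mb _]; apply/joinsP_seq => y yt _.
exact/mb/(joins_sup_seq id yt).
Qed.

Hypotheses (hret : gc_retractable alpha beta) (hbeta0 : beta \bot = \bot).

Lemma beta_eq0 b : beta b = \bot -> b = \bot.
Proof. by move=> b0; apply: essential0; rewrite -alpha0 -b0; apply: hret. Qed.

Lemma alpha_eq0 a : alpha a = \bot -> a = \bot.
Proof. by move=> a0; apply/eqP; rewrite -lex0 -hbeta0 -a0 gc_unit. Qed.

Lemma alpha_meet_eq0 u v :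
  beta (alpha u) `&` beta (alpha v) = \bot -> alpha u `&` alpha v = \bot.
Proof. by rewrite -betaI; apply: beta_eq0. Qed.

Lemma indep_map_beta (s : seq B) :
  join_independent s -> join_independent (map beta s).
Proof.
move=> ind; apply: (indep_map beta ind) => [x xs|t x sub xs xt].
  by case: ind => _ [/(_ x xs) + _]; apply: contra => /eqP/beta_eq0 ->.
apply/eqP; rewrite -lex0 -[leRHS]hbeta0 -(indep_meet_eq0 ind sub xs xt) betaI.
exact: leI2 (join_beta_le t) (lexx _).
Qed.

Lemma indep_map_alpha (s : seq A) : join_independent s ->
  (forall t x, {subset t <= s} -> x \in s -> x \notin t ->
     beta (alpha (\join_(y <- t) y)) `&` beta (alpha x) = \bot) ->
  join_independent (map alpha s).
Proof.
move=> ind closed_meet; apply: (indep_map alpha ind) => [x xs|t x sub xs xt].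
  by case: ind => _ [/(_ x xs) + _]; apply: contra => /eqP/alpha_eq0 ->.
have <- : alpha (\join_(y <- t) y) = \join_(y <- t) alpha y.
  elim: t {sub xt} => [|y t IH]; first by rewrite !big_nil alpha0.
  by rewrite !big_cons alphaU IH.
exact/alpha_meet_eq0/closed_meet.
Qed.

Lemma udim_le_retractable : udim_le B A.
Proof.
move=> k [s [ind <-]]; exists (size s); split => //.
by exists (map beta s); rewrite size_map; split => //; apply: indep_map_beta.
Qed.

Lemma udim_le_essential : gc_essential alpha beta -> udim_le A B.
Proof.
move=> hess k [s [ind <-]]; exists (size s); split => //.
exists (map alpha s); rewrite size_map; split => //.
apply: indep_map_alpha => // t x sub xs xt.
apply: essential_disjoint (hess _) (hess _); exact: (indep_meet_eq0 ind).
Qed.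

Hypothesis hmod : modular_lattice A.

Lemma beta_alpha_join {c : seq A} : beta_additive beta -> join_independent c ->
  (forall y, y \in c -> essential_in y (beta (alpha y))) ->
  forall t, {subset t <= c} ->
  beta (alpha (\join_(y <- t) y)) = \join_(y <- t) beta (alpha y).
Proof.
move=> hadd ind ess; elim=> [|y t IH] sub; first by rewrite !big_nil alpha0.
have yc : y \in c by apply: sub; rewrite inE eqxx.
have {}sub : {subset t <= c} by move=> z zt; apply: sub; rewrite inE zt orbT.
rewrite !big_cons; have [yt | yt] := boolP (y \in t).
  by rewrite !(join_idPr (joins_sup_seq _ yt isT)); apply: IH.
rewrite alphaU hadd; first by rewrite IH.
apply: alpha_meet_eq0.
by rewrite IH // meetC; apply: (essential_extension_meet_eq0 hmod _ _ ind ess).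
Qed.

Lemma udim_le_cyclically_essential : cyclically_generated A ->
  gc_cyclically_essential alpha beta -> beta_additive beta -> udim_le A B.
Proof.
move=> hcg hce hadd k [s [ind <-]]; exists (size s); split => //.
have [c [indc <- cyc]] := exists_cyclic_indep hcg ind.
have essc y : y \in c -> essential_in y (beta (alpha y)) by move/cyc/hce.
exists (map alpha c); rewrite size_map; split => //.
apply: indep_map_alpha => // t x sub xs xt.
rewrite (beta_alpha_join hadd indc essc _ sub).
exact: (essential_extension_meet_eq0 hmod _ _ indc essc).
Qed.

End GaloisConnection.

Theorem theorem4p1 (d1 d2 : Order.disp_t)
  (A : tbLatticeType d1) (B : tbLatticeType d2)
  (alpha : A -> B) (beta : B -> A)
  (hA01 : (\bot : A) != \top) (hB01 : (\bot : B) != \top)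
  (hAmod : modular_lattice A) (hBmod : modular_lattice B)
  (hgc : galois_connection alpha beta)
  (hret : gc_retractable alpha beta)
  (hbeta0 : beta \bot = \bot) :
  udim_le B A /\
  (gc_essential alpha beta -> udim_eq A B) /\
  (cyclically_generated A -> gc_cyclically_essential alpha beta ->
     beta_additive beta -> udim_eq A B).
Proof.
have BA := udim_le_retractable hgc hret hbeta0.
split => //; split => [hess | hcg hce hadd]; split => //.
  exact: udim_le_essential hgc hret hbeta0 hess.
exact: udim_le_cyclically_essential hgc hret hbeta0 hAmod hcg hce hadd.
Qed.
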